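(* Let $\bm{L}\in\mathbb{R}^{m\times n}$ have rank $r$ and compact SVD $\bm{L}=\bm{W}_{\bm{L}}\bm{\Sigma}_{\bm{L}}\bm{V}_{\bm{L}}^T$, and suppose $\max_{i}\|\bm{W}_{\bm{L}}^T\bm{e}_i\|_2\leq\sqrt{\mu_1(\bm{L}) r/m}$ and $\max_{i}\|\bm{V}_{\bm{L}}^T\bm{e}_i\|_2\leq\sqrt{\mu_2(\bm{L}) r/n}$. Then for any $J\subseteq[n]$, the matrix $\bm{C}=\bm{L}(:,J)$, with compact SVD $\bm{C}=\bm{W}_{\bm{C}}\bm{\Sigma}_{\bm{C}}\bm{V}_{\bm{C}}^T$, satisfies \[\max_i\|\bm{V}_{\bm{C}}^T\bm{e}_i\|_2\leq\kappa(\bm{L})\,\frac{\|\bm{C}^\dagger\|_2}{\|\bm{L}^\dagger\|_2}\sqrt{\frac{\mu_2(\bm{L}) r}{n}}.\]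
   Context: $[n]=\{1,\dots,n\}$; $\bm{L}(:,J)$ is the column submatrix with column indices in $J$; $\bm{A}^\dagger$ is the Moore–Penrose pseudoinverse; $\kappa(\bm{A})=\|\bm{A}\|_2\|\bm{A}^\dagger\|_2=\sigma_{\max}(\bm{A})/\sigma_{\min}(\bm{A})$ with $\sigma_{\min}$ the smallest nonzero singular value. *)

From HB Require Import structures.
From mathcomp Require Import all_boot all_order all_algebra.
From mathcomp Require Import classical_sets reals.
Set Implicit Arguments. Unset Strict Implicit. Unset Printing Implicit Defensive.
Import Order.TTheory GRing.Theory Num.Theory.
Local Open Scope ring_scope.
Local Open Scope classical_set_scope.

Section Defs.
Context {R : realType}.

Definition norm2 p (x : 'cV[R]_p) : R := Num.sqrt (\sum_(i < p) x i 0 ^+ 2).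

Definition evec p (i : 'I_p) : 'cV[R]_p := delta_mx i 0.

Definition specnorm p q (A : 'M[R]_(p, q)) : R :=
  sup [set norm2 (A *m x) | x in [set x : 'cV[R]_q | norm2 x <= 1]].

Definition is_pinv p q (A : 'M[R]_(p, q)) (X : 'M[R]_(q, p)) : Prop :=
  [/\ A *m X *m A = A, X *m A *m X = X,
      (A *m X)^T = A *m X & (X *m A)^T = X *m A].

Definition kappa p q (A : 'M[R]_(p, q)) (Ad : 'M[R]_(q, p)) : R :=
  specnorm A * specnorm Ad.

Definition compact_svd p q k (A : 'M[R]_(p, q))
    (W : 'M[R]_(p, k)) (s : 'rV[R]_k) (V : 'M[R]_(q, k)) : Prop :=
  [/\ W^T *m W = 1%:M, V^T *m V = 1%:M,
      (forall i, 0 < s 0 i),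
      (forall i j : 'I_k, (i <= j)%N -> s 0 j <= s 0 i)
    & A = W *m diag_mx s *m V^T].

(* Column submatrix L(:, J), columns taken in increasing index order. *)
Definition colsubset p q (L : 'M[R]_(p, q)) (J : {set 'I_q}) : 'M[R]_(p, #|J|) :=
  colsub (fun k : 'I_#|J| => enum_val k) L.

End Defs.

From HB Require Import structures.
From mathcomp Require Import all_boot all_order all_algebra.
From mathcomp Require Import classical_sets reals.
Import Order.TTheory GRing.Theory Num.Theory.
Set Implicit Arguments. Unset Strict Implicit.
Local Open Scope ring_scope.

(* If C = W_C S_C V_C^T is a compact SVD and C^+ the pseudoinverse, then
   C^+ C = V_C V_C^T, so that ||V_C^T x|| = ||C^+ C x|| <= ||C^+|| ||C x||.
   For x = e_i, C e_i = L e_j is a column of L = L V_L V_L^T, whence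
   ||L e_j|| <= ||L|| ||V_L^T e_j||.  Finally kappa(L) / ||L^+|| = ||L||, also
   when ||L^+|| = 0 (where x / 0 = 0), since then L = L L^+ L = 0. *)

Section Norm2.
Variable R : realType.

Lemma norm2E p (x : 'cV[R]_p) : norm2 x = Num.sqrt ((x^T *m x) 0 0).
Proof.
rewrite /norm2 mxE; congr Num.sqrt.
by apply: eq_bigr => i _; rewrite !mxE expr2.
Qed.

Lemma norm2_ge0 p (x : 'cV[R]_p) : 0 <= norm2 x.
Proof. exact: sqrtr_ge0. Qed.

Lemma norm2_0 p : norm2 (0 : 'cV[R]_p) = 0.
Proof. by rewrite /norm2 big1 ?sqrtr0 // => i _; rewrite mxE expr0n. Qed.

Lemma norm2_eq0 p (x : 'cV[R]_p) : norm2 x = 0 -> x = 0.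
Proof.
move=> /eqP; rewrite sqrtr_eq0 => sum_le0.
have sum_eq0 : \sum_(i < p) x i 0 ^+ 2 = 0.
  by apply/eqP; rewrite eq_le sum_le0 sumr_ge0 // => i _; rewrite sqr_ge0.
apply/matrixP => i j; rewrite (ord1 j) mxE.
have /eqP := psumr_eq0P (fun i _ => sqr_ge0 (x i 0)) sum_eq0 (i := i) isT.
by rewrite sqrf_eq0 => /eqP.
Qed.

Lemma norm2Z p c (x : 'cV[R]_p) : norm2 (c *: x) = `|c| * norm2 x.
Proof.
rewrite /norm2 -sqrtr_sqr -sqrtrM ?sqr_ge0 // mulr_sumr; congr Num.sqrt.
by apply: eq_bigr => i _; rewrite !mxE exprMn.
Qed.

Lemma normr_coord_le_norm2 p (x : 'cV[R]_p) j : `|x j 0| <= norm2 x.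
Proof.
rewrite /norm2 -sqrtr_sqr ler_wsqrtr // (bigD1 j) //= lerDl.
by apply: sumr_ge0 => i _; rewrite sqr_ge0.
Qed.

Lemma norm2_isometry p k (V : 'M[R]_(p, k)) y :
  V^T *m V = 1%:M -> norm2 (V *m y) = norm2 y.
Proof. by move=> VtV; rewrite !norm2E trmx_mul -mulmxA (mulmxA V^T) VtV mul1mx. Qed.

End Norm2.

Section SpectralNorm.
Variables (R : realType) (p q : nat) (A : 'M[R]_(p, q)).

Let image_unit_ball :=
  [set norm2 (A *m x) | x in [set x : 'cV[R]_q | norm2 x <= 1]]%classic.

Lemma specnorm_has_ub : has_ubound image_unit_ball.
Proof.
exists (Num.sqrt (\sum_(i < p) (\sum_(j < q) `|A i j|) ^+ 2)).
move=> _ [x /= x_le1 <-]; rewrite /norm2 ler_wsqrtr // ler_sum // => i _.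
have Ax_le : `|(A *m x) i 0| <= \sum_(j < q) `|A i j|.
  rewrite mxE; apply: (le_trans (ler_norm_sum _ _ _)).
  apply: ler_sum => j _; rewrite normrM -[leRHS]mulr1 ler_wpM2l //.
  exact: le_trans (normr_coord_le_norm2 x j) x_le1.
by rewrite -real_normK ?num_real // !expr2 ler_pM.
Qed.

Lemma specnorm_ge0 : 0 <= specnorm A.
Proof.
apply: (ub_le_sup specnorm_has_ub).
by exists 0; rewrite /= ?mulmx0 ?norm2_0.
Qed.

Lemma norm2_mul_le_specnorm x : norm2 (A *m x) <= specnorm A * norm2 x.
Proof.
have [x0|x_neq0] := eqVneq (norm2 x) 0.
  by rewrite (norm2_eq0 x0) mulmx0 !norm2_0 mulr0.
have x_gt0 : 0 < norm2 x by rewrite lt_neqAle eq_sym x_neq0 norm2_ge0.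
set y := (norm2 x)^-1 *: x.
have y_unit : norm2 y = 1.
  by rewrite /y norm2Z ger0_norm ?invr_ge0 ?norm2_ge0 // mulVf.
have Ay_le : norm2 (A *m y) <= specnorm A.
  by apply: (ub_le_sup specnorm_has_ub); exists y => //=; rewrite y_unit.
have -> : norm2 (A *m x) = norm2 x * norm2 (A *m y).
  by rewrite /y -scalemxAr norm2Z ger0_norm ?invr_ge0 ?norm2_ge0 // mulrA mulfV // mul1r.
by rewrite mulrC ler_pM2r.
Qed.

Lemma specnorm_le c :
  0 <= c -> (forall x, norm2 (A *m x) <= c * norm2 x) -> specnorm A <= c.
Proof.
move=> c_ge0 Ax_le; apply: ge_sup.
  by exists 0, 0; rewrite /= ?mulmx0 norm2_0.
move=> _ [x /= x_le1 <-]; apply: le_trans (Ax_le x) _.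
by rewrite -[leRHS]mulr1 ler_wpM2l.
Qed.

End SpectralNorm.

Section CompactSVD.
Variables (R : realType) (p q k : nat) (A : 'M[R]_(p, q)).
Variables (W : 'M[R]_(p, k)) (s : 'rV[R]_k) (V : 'M[R]_(q, k)).
Hypothesis svdA : compact_svd A W s V.

Lemma svd_mul_rowproj : A *m (V *m V^T) = A.
Proof.
case: svdA => _ VtV _ _ ->.
by rewrite !mulmxA -(mulmxA (W *m _) V^T V) VtV mulmx1.
Qed.

Lemma svd_inv_mul : V *m diag_mx (\row_a (s 0 a)^-1) *m W^T *m A = V *m V^T.
Proof.
case: svdA => WtW _ s_gt0 _ ->.
rewrite !mulmxA -(mulmxA (V *m _) W^T W) WtW mulmx1 -(mulmxA V) mulmx_diag.
suff -> : diag_mx (\row_a ((\row_a (s 0 a)^-1) 0 a * s 0 a)) = 1%:M :> 'M[R]_k.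
  by rewrite mulmx1.
by apply/matrixP => a b; rewrite !mxE; case: eqP => // _; rewrite mulVf ?gt_eqF.
Qed.

(* P := X A and Q := V V^T are symmetric with P Q = P and Q P = Q,
   hence P = (P Q)^T = Q P = Q. *)
Lemma pinv_mul_svd X : is_pinv A X -> X *m A = V *m V^T.
Proof.
case=> AXA _ _ XA_sym.
have proj_sym : (V *m V^T)^T = V *m V^T by rewrite trmx_mul trmxK.
have XA_proj : X *m A *m (V *m V^T) = X *m A by rewrite -mulmxA svd_mul_rowproj.
have proj_XA : V *m V^T *m (X *m A) = V *m V^T.
  by rewrite -svd_inv_mul -(mulmxA _ A) (mulmxA A) AXA.
by rewrite -XA_proj -[X *m A *m _]trmxK trmx_mul proj_sym XA_sym proj_XA.
Qed.

Lemma norm2_svd_trmx_le X x :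
  is_pinv A X -> norm2 (V^T *m x) <= specnorm X * norm2 (A *m x).
Proof.
case: (svdA) => _ VtV _ _ _ pinvX.
rewrite -(norm2_isometry _ VtV) mulmxA -(pinv_mul_svd pinvX) -mulmxA.
exact: norm2_mul_le_specnorm.
Qed.

Lemma norm2_mul_le_svd x : norm2 (A *m x) <= specnorm A * norm2 (V^T *m x).
Proof.
case: (svdA) => _ VtV _ _ _.
rewrite -{1}svd_mul_rowproj -!mulmxA.
apply: le_trans (norm2_mul_le_specnorm _ _) _.
by rewrite (norm2_isometry _ VtV).
Qed.

End CompactSVD.

Section Pseudoinverse.
Variables (R : realType) (p q : nat) (A : 'M[R]_(p, q)) (X : 'M[R]_(q, p)).
Hypothesis pinvX : is_pinv A X.

Lemma pinv_specnorm_eq0 : specnorm X = 0 -> specnorm A = 0.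
Proof.
move=> X0; apply/eqP; rewrite eq_le specnorm_ge0 andbT.
apply: specnorm_le => // x; rewrite mul0r.
case: pinvX => AXA _ _ _; rewrite -AXA -!mulmxA.
apply: le_trans (norm2_mul_le_specnorm _ _) _.
rewrite mulr_ge0_le0 ?specnorm_ge0 //.
by apply: le_trans (norm2_mul_le_specnorm _ _) _; rewrite X0 mul0r.
Qed.

Lemma kappa_div_specnorm_pinv : kappa A X / specnorm X = specnorm A.
Proof.
have [X0|X_neq0] := eqVneq (specnorm X) 0.
  by rewrite X0 invr0 mulr0 pinv_specnorm_eq0.
by rewrite /kappa mulfK.
Qed.

End Pseudoinverse.

Lemma colsubset_mul_evec (R : realType) p q (L : 'M[R]_(p, q)) J i :
  colsubset L J *m evec i = L *m evec (enum_val i).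
Proof. by rewrite /evec -!colE /colsubset col_colsub. Qed.

Theorem lemma4p2 (R : realType) (m n r : nat) (L : 'M[R]_(m, n))
  (WL : 'M[R]_(m, r)) (sL : 'rV[R]_r) (VL : 'M[R]_(n, r))
  (Ld : 'M[R]_(n, m)) (mu1 mu2 : R) (J : {set 'I_n})
  (k : nat) (WC : 'M[R]_(m, k)) (sC : 'rV[R]_k) (VC : 'M[R]_(#|J|, k))
  (Cd : 'M[R]_(#|J|, m)) :
  \rank L = r ->
  compact_svd L WL sL VL ->
  (forall i : 'I_m, norm2 (WL^T *m evec i) <= Num.sqrt (mu1 * r%:R / m%:R)) ->
  (forall i : 'I_n, norm2 (VL^T *m evec i) <= Num.sqrt (mu2 * r%:R / n%:R)) ->
  is_pinv L Ld ->
  compact_svd (colsubset L J) WC sC VC ->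
  is_pinv (colsubset L J) Cd ->
  forall i : 'I_#|J|,
    norm2 (VC^T *m evec i) <=
      kappa L Ld * (specnorm Cd / specnorm Ld) * Num.sqrt (mu2 * r%:R / n%:R).
Proof.
move=> _ svdL _ coherentVL pinvL svdC pinvC i.
rewrite mulrCA kappa_div_specnorm_pinv // -(mulrA (specnorm Cd)).
apply: le_trans (norm2_svd_trmx_le svdC _ pinvC) _.
rewrite colsubset_mul_evec; apply: ler_wpM2l; first exact: specnorm_ge0.
apply: le_trans (norm2_mul_le_svd svdL _) _.
by apply: ler_wpM2l; [exact: specnorm_ge0 | exact: coherentVL].
Qed.
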